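(* No maximal ideal $\mathcal{I}$ on $\omega$ with $\mathrm{fin} \subseteq \mathcal{I}$ is uniformly weakly Ramsey.
   Context: $\mathrm{fin}$ is the ideal of finite subsets of $\omega$; $\mathcal{I}^+$ denotes the $\mathcal{I}$-positive sets (subsets of $\omega$ not in $\mathcal{I}$); for $A \subseteq \omega$, $\mathcal{I}|A = \{I \subseteq A : I \in \mathcal{I}\}$, an ideal on $A$, and $(\mathcal{I}|A)^+$ is the family of subsets of $A$ not in $\mathcal{I}$. A coloring is a function $c : [\omega]^2 \to 2$; it is subadditive if $c(\{m,n\}) \le c(\{m,k\}) + c(\{n,k\})$ for all $m<n<k$. A set $H$ is 0-homogeneous for $c$ if $c(\{m,n\}) = 0$ for all distinct $m,n \in H$; $H$ is nowhere 0-homogeneous (with respect to $\mathcal{I}$ and $c$) if every $B \in (\mathcal{I}|H)^+$ contains distinct $m,n$ with $c(\{m,n\}) = 1$. A function $\Phi : [\omega]^\omega \times 2^{[\omega]^2} \to [\omega]^\omega$ witnesses that $\mathcal{I}$ is weakly Ramsey if for every $A \in \mathcal{I}^+$ and every subadditive coloring $c$, $H = \Phi(A,c)$ belongs to $(\mathcal{I}|A)^+$ and is either 0-homogeneous or nowhere 0-homogeneous for $c$. $\mathcal{I}$ is uniformly weakly Ramsey if some Borel function witnesses that $\mathcal{I}$ is weakly Ramsey. *)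

(* Subsets of omega are represented by characteristic functions nat -> bool. *)

Definition subset (A B : nat -> bool) : Prop := forall n, A n = true -> B n = true.
Definition emptyset : nat -> bool := fun _ => false.
Definition fullset : nat -> bool := fun _ => true.
Definition unionb (A B : nat -> bool) : nat -> bool := fun n => orb (A n) (B n).
Definition finite_set (A : nat -> bool) : Prop :=
  exists N, forall n, A n = true -> n < N.

Definition is_ideal (I : (nat -> bool) -> Prop) : Prop :=
  I emptyset /\
  (forall A B, subset A B -> I B -> I A) /\
  (forall A B, I A -> I B -> I (unionb A B)) /\
  ~ I fullset.

Definition maximal_ideal (I : (nat -> bool) -> Prop) : Prop :=
  is_ideal I /\
  forall J, is_ideal J -> (forall A, I A -> J A) -> forall A, J A -> I A.

Definition contains_fin (I : (nat -> bool) -> Prop) : Prop :=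
  forall A, finite_set A -> I A.

(* Colorings c : [omega]^2 -> 2 are encoded by c : nat -> nat -> bool,
   the color of {m,n} being read off with m < n; [col c m n] is symmetric. *)
Definition col (c : nat -> nat -> bool) (m n : nat) : bool :=
  if Nat.ltb m n then c m n else c n m.

Definition subadditive (c : nat -> nat -> bool) : Prop :=
  forall m n k, m < n -> n < k ->
    (if col c m n then 1 else 0) <=
    (if col c m k then 1 else 0) + (if col c n k then 1 else 0).

Definition zero_homogeneous (c : nat -> nat -> bool) (H : nat -> bool) : Prop :=
  forall m n, H m = true -> H n = true -> m <> n -> col c m n = false.

Definition nowhere_zero_homogeneous (I : (nat -> bool) -> Prop)
    (c : nat -> nat -> bool) (H : nat -> bool) : Prop :=
  forall B, subset B H -> ~ I B ->
    exists m n, B m = true /\ B n = true /\ m <> n /\ col c m n = true.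

Definition pos_restr (I : (nat -> bool) -> Prop) (A H : nat -> bool) : Prop :=
  subset H A /\ ~ I H.

Definition witnesses_weakly_Ramsey (I : (nat -> bool) -> Prop)
    (Phi : (nat -> bool) * (nat -> nat -> bool) -> (nat -> bool)) : Prop :=
  forall A c, ~ I A -> subadditive c ->
    pos_restr I A (Phi (A, c)) /\
    (zero_homogeneous c (Phi (A, c)) \/ nowhere_zero_homogeneous I c (Phi (A, c))).

(* Borel sets of the Polish space 2^omega x 2^(omega x omega) (product topology):
   the sigma-algebra generated by the subbasic clopen cylinders. *)
Definition Dom := ((nat -> bool) * (nat -> nat -> bool))%type.

Inductive borel_dom : (Dom -> Prop) -> Prop :=
  | borel_cyl1 : forall n, borel_dom (fun p => fst p n = true)
  | borel_cyl2 : forall m n, borel_dom (fun p => snd p m n = true)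
  | borel_compl : forall S, borel_dom S -> borel_dom (fun p => ~ S p)
  | borel_cunion : forall S : nat -> Dom -> Prop,
      (forall i, borel_dom (S i)) -> borel_dom (fun p => exists i, S i p)
  | borel_ext : forall S T, borel_dom S -> (forall p, S p <-> T p) -> borel_dom T.

(* Borel function into 2^omega: preimages of the subbasic cylinders
   (which generate the Borel sigma-algebra of 2^omega) are Borel. *)
Definition borel_function (Phi : Dom -> (nat -> bool)) : Prop :=
  forall n, borel_dom (fun p => Phi p n = true).

Definition uniformly_weakly_Ramsey (I : (nat -> bool) -> Prop) : Prop :=
  exists Phi, borel_function Phi /\ witnesses_weakly_Ramsey I Phi.

(* For A ⊆ ω let c_A colour {m, n} by 1 iff A separates m and n; c_A is
   subadditive.  If Φ witnesses that I is weakly Ramsey, H := Φ(ω, c_A) is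
   I-positive, and A is I-positive iff H meets A: if A is positive its
   complement lies in I (a maximal ideal is prime), so H meets A; if A ∈ I and
   n ∈ H ∩ A, a 0-homogeneous H lies inside A, while a nowhere 0-homogeneous H
   is covered by A and H ∖ A ∈ I.  For Borel Φ this makes the family of
   I-positive sets a Borel, hence Baire measurable, subset of 2^ω.  But if I is
   maximal and contains fin, flipping all coordinates beyond n is a
   homeomorphism of 2^ω exchanging I and its complement, and a point that is
   generic for a comeager set and for its flipped image refutes the Baire
   property. *)

From Stdlib Require Import Arith Lia List Bool Classical IndefiniteDescription Cantor.
Import ListNotations.

Definition extends (x : nat -> bool) (u : list bool) : Prop :=
  forall i, i < length u -> x i = nth i u false.

Definition prefix (u v : list bool) : Prop :=
  length u <= length v /\ forall i, i < length u -> nth i u false = nth i v false.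

Definition comparable (u v : list bool) : Prop := prefix u v \/ prefix v u.

Lemma prefix_refl u : prefix u u.
Proof. split; auto. Qed.

Lemma prefix_trans u v w : prefix u v -> prefix v w -> prefix u w.
Proof.
  intros [huv huv'] [hvw hvw']. split; [lia|].
  intros i hi. rewrite huv' by lia. apply hvw'; lia.
Qed.

Lemma prefix_app u a : prefix u (u ++ a).
Proof.
  split; [rewrite length_app; lia|].
  intros i hi. rewrite app_nth1; auto.
Qed.

Lemma extends_prefix x u v : extends x v -> prefix u v -> extends x u.
Proof. intros hx [hlen huv] i hi. rewrite huv by assumption. apply hx; lia. Qed.

Lemma extends_comparable x u v : extends x u -> extends x v -> comparable u v.
Proof.
  intros hu hv. destruct (le_lt_dec (length u) (length v)).
  - left. split; [assumption|]. intros i hi. rewrite <- hu, <- hv; auto; lia.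
  - right. split; [lia|]. intros i hi. rewrite <- hu, <- hv; auto; lia.
Qed.

Definition restrict (x : nat -> bool) (n : nat) : list bool := map x (seq 0 n).

Lemma length_restrict x n : length (restrict x n) = n.
Proof. unfold restrict. rewrite length_map, length_seq; reflexivity. Qed.

Lemma nth_restrict x n i : i < n -> nth i (restrict x n) false = x i.
Proof.
  intro hi. unfold restrict.
  rewrite nth_indep with (d' := x 0) by (rewrite length_map, length_seq; assumption).
  rewrite map_nth, seq_nth; auto.
Qed.

Lemma extends_restrict x n : extends x (restrict x n).
Proof.
  intros i hi. rewrite length_restrict in hi. symmetry. apply nth_restrict, hi.
Qed.

(* A sequence of maps [D k] extending finite strings codes the dense open sets
   [{x | exists u, extends x (D k u)}]; the [D]-generic points form the
   comeager set they intersect to. *)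
Definition expanding (D : nat -> list bool -> list bool) : Prop :=
  forall k u, prefix u (D k u).

Definition generic (D : nat -> list bool -> list bool) (x : nat -> bool) : Prop :=
  forall k, exists u, extends x (D k u).

Section BaireCategory.

Variable D : nat -> list bool -> list bool.
Hypothesis D_expanding : expanding D.
Variable s : list bool.

(* Appending a bit before each extension makes the lengths grow. *)
Fixpoint approx (k : nat) : list bool :=
  match k with
  | 0 => s
  | S k => D k (approx k ++ [false])
  end.

Lemma approx_step k : prefix (approx k) (approx (S k)).
Proof. simpl. eapply prefix_trans; [apply prefix_app | apply D_expanding]. Qed.

Lemma length_approx k : k <= length (approx k).
Proof.
  induction k as [|k IH]; simpl; [lia|].
  destruct (D_expanding k (approx k ++ [false])) as [hlen _].
  rewrite length_app in hlen; simpl in hlen; lia.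
Qed.

Lemma approx_mono k l : k <= l -> prefix (approx k) (approx l).
Proof.
  induction 1; [apply prefix_refl|].
  eapply prefix_trans; [eassumption | apply approx_step].
Qed.

Definition approx_limit (i : nat) : bool := nth i (approx (S i)) false.

Lemma extends_approx_limit k : extends approx_limit (approx k).
Proof.
  intros i hi. unfold approx_limit.
  destruct (le_lt_dec k (S i)) as [hk|hk].
  - symmetry. apply (approx_mono _ _ hk), hi.
  - apply (approx_mono (S i) k); [lia|]. pose proof (length_approx (S i)); lia.
Qed.

Theorem generic_extension : exists x, extends x s /\ generic D x.
Proof.
  exists approx_limit. split; [apply (extends_approx_limit 0)|].
  intro k. exists (approx k ++ [false]). apply (extends_approx_limit (S k)).
Qed.

End BaireCategory.

Definition interleave (E : nat -> nat -> list bool -> list bool) (k : nat) :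
    list bool -> list bool :=
  E (fst (Cantor.of_nat k)) (snd (Cantor.of_nat k)).

Lemma expanding_interleave E : (forall i, expanding (E i)) -> expanding (interleave E).
Proof. intros hE k u. apply hE. Qed.

Lemma generic_interleave E x : generic (interleave E) x -> forall i, generic (E i) x.
Proof.
  intros hx i k. destruct (hx (Cantor.to_nat (i, k))) as [u hu]. exists u.
  unfold interleave in hu. rewrite Cantor.cancel_of_to in hu. exact hu.
Qed.

Definition join (D1 D2 : nat -> list bool -> list bool) : nat -> list bool -> list bool :=
  interleave (fun i => match i with 0 => D1 | _ => D2 end).

Lemma expanding_join D1 D2 : expanding D1 -> expanding D2 -> expanding (join D1 D2).
Proof. intros h1 h2. apply expanding_interleave. intros [|i]; assumption. Qed.

Lemma generic_join D1 D2 x : generic (join D1 D2) x -> generic D1 x /\ generic D2 x.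
Proof. intro hx. split; [apply (generic_interleave _ _ hx 0) | apply (generic_interleave _ _ hx 1)]. Qed.

Definition open_set (W : list bool -> Prop) (x : nat -> bool) : Prop :=
  exists u, W u /\ extends x u.

Definition baire_property (S : (nat -> bool) -> Prop) : Prop :=
  exists W D, expanding D /\ forall x, generic D x -> (S x <-> open_set W x).

Lemma baire_property_ext S T :
  baire_property S -> (forall x, S x <-> T x) -> baire_property T.
Proof.
  intros (W & D & hD & hS) hST. exists W, D. split; [assumption|].
  intros x hx. rewrite <- hST. auto.
Qed.

Lemma baire_property_local S N :
  (forall x y, (forall i, i < N -> x i = y i) -> S x -> S y) -> baire_property S.
Proof.
  intro hS.
  exists (fun u => N <= length u /\ S (fun i => nth i u false)), (fun _ u => u).
  split; [intros k u; apply prefix_refl|].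
  intros x _. split.
  - intro hx. exists (restrict x N). rewrite length_restrict.
    split; [split; [lia|] | apply extends_restrict].
    apply (hS x); [|assumption]. intros i hi. symmetry. apply nth_restrict, hi.
  - intros (u & [hlen hu] & hxu). refine (hS _ x _ hu).
    intros i hi. symmetry. apply hxu. lia.
Qed.

Lemma baire_property_cunion (S : nat -> (nat -> bool) -> Prop) :
  (forall i, baire_property (S i)) -> baire_property (fun x => exists i, S i x).
Proof.
  intro hS.
  destruct (functional_choice
    (fun i (p : (list bool -> Prop) * (nat -> list bool -> list bool)) =>
       expanding (snd p) /\ forall x, generic (snd p) x -> (S i x <-> open_set (fst p) x)))
    as [f hf].
  { intro i. destruct (hS i) as (W & D & h). exists (W, D). exact h. }
  exists (fun u => exists i, fst (f i) u), (interleave (fun i => snd (f i))).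
  split; [apply expanding_interleave; intro i; apply hf|].
  intros x hx. pose proof (generic_interleave _ _ hx) as hxi.
  split.
  - intros [i hi]. apply (proj2 (hf i) x (hxi i)) in hi as (u & hu & hxu).
    exists u. split; [exists i|]; assumption.
  - intros (u & [i hu] & hxu). exists i. apply (proj2 (hf i) x (hxi i)).
    exists u. split; assumption.
Qed.

Definition avoids (W : list bool -> Prop) (u : list bool) : Prop :=
  forall v, comparable u v -> ~ W v.

Lemma enter_or_avoid W : exists f : list bool -> list bool, forall u,
  prefix u (f u) /\ ((exists v, W v /\ prefix v (f u)) \/ avoids W (f u)).
Proof.
  apply (functional_choice (fun u w =>
    prefix u w /\ ((exists v, W v /\ prefix v w) \/ avoids W w))). intro u.
  destruct (classic (exists v, comparable u v /\ W v)) as [(v & [huv|hvu] & hv) | hnone].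
  - exists v. split; [assumption|]. left. exists v. split; [assumption | apply prefix_refl].
  - exists u. split; [apply prefix_refl|]. left. exists v. split; assumption.
  - exists u. split; [apply prefix_refl|]. right.
    intros v huv hv. apply hnone. exists v. split; assumption.
Qed.

Lemma open_set_avoids W x : open_set (avoids W) x -> ~ open_set W x.
Proof.
  intros (u & hu & hxu) (v & hv & hxv). exact (hu v (extends_comparable x u v hxu hxv) hv).
Qed.

Lemma baire_property_compl S : baire_property S -> baire_property (fun x => ~ S x).
Proof.
  intros (W & D & hD & hS). destruct (enter_or_avoid W) as [f hf].
  exists (avoids W), (join (fun _ => f) D).
  split; [apply expanding_join; [intros _ u; apply hf | exact hD]|].
  intros x hx. apply generic_join in hx as [hxf hxD]. rewrite (hS x hxD).
  split; [|apply open_set_avoids].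
  intro hnot. destruct (hxf 0) as [u hxu].
  destruct (hf u) as [_ [(v & hv & hvu) | hu]].
  - exfalso. apply hnot. exists v. split; [|apply (extends_prefix x v (f u))]; assumption.
  - exists (f u). split; assumption.
Qed.

Lemma baire_property_and S T :
  baire_property S -> baire_property T -> baire_property (fun x => S x /\ T x).
Proof.
  intros hS hT.
  apply baire_property_ext with
    (fun x => ~ exists i, match i with 0 => ~ S x | _ => ~ T x end).
  - apply baire_property_compl, baire_property_cunion.
    intros [|i]; apply baire_property_compl; assumption.
  - intro x. split.
    + intro h. split; apply NNPP; intro hn; apply h; [exists 0 | exists 1]; assumption.
    + intros [hSx hTx] [[|i] hi]; auto.
Qed.

Definition flip (n : nat) (x : nat -> bool) (i : nat) : bool :=
  if i <? n then x i else negb (x i).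

Definition flip_list (n : nat) (v : list bool) : list bool :=
  restrict (flip n (fun i => nth i v false)) (length v).

Definition flipped (n : nat) (D : nat -> list bool -> list bool) (k : nat) (v : list bool) :
    list bool :=
  flip_list n (D k (flip_list n v)).

Lemma length_flip_list n v : length (flip_list n v) = length v.
Proof. apply length_restrict. Qed.

Lemma nth_flip_list n v i :
  i < length v -> nth i (flip_list n v) false = flip n (fun j => nth j v false) i.
Proof. apply nth_restrict. Qed.

Lemma extends_flip_list n x v : extends x (flip_list n v) -> extends (flip n x) v.
Proof.
  intros hx i hi.
  assert (hxi : x i = flip n (fun j => nth j v false) i).
  { rewrite <- nth_flip_list by assumption. apply hx. rewrite length_flip_list; assumption. }
  unfold flip in *. destruct (i <? n); rewrite hxi; [reflexivity | apply negb_involutive].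
Qed.

Lemma prefix_flip_list n u w : prefix (flip_list n u) w -> prefix u (flip_list n w).
Proof.
  intros [hlen hnth]. rewrite length_flip_list in hlen.
  split; [rewrite length_flip_list; assumption|].
  intros i hi. rewrite nth_flip_list by lia.
  specialize (hnth i). rewrite length_flip_list, nth_flip_list in hnth by assumption.
  specialize (hnth hi). unfold flip in *.
  destruct (i <? n); [assumption|]. rewrite <- hnth. symmetry. apply negb_involutive.
Qed.

Lemma expanding_flipped n D : expanding D -> expanding (flipped n D).
Proof. intros hD k v. apply prefix_flip_list, hD. Qed.

Lemma generic_flipped n D x : generic (flipped n D) x -> generic D (flip n x).
Proof.
  intros hx k. destruct (hx k) as [u hu]. exists (flip_list n u). apply extends_flip_list, hu.
Qed.

Lemma extends_flip_length x u : extends x u -> extends (flip (length u) x) u.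
Proof.
  intros hx i hi. unfold flip. rewrite (proj2 (Nat.ltb_lt i (length u)) hi). apply hx, hi.
Qed.

Definition ideal_join (I : (nat -> bool) -> Prop) (A B : nat -> bool) : Prop :=
  exists X, I X /\ subset B (unionb X A).

Lemma ideal_join_is_ideal I A :
  is_ideal I -> ~ ideal_join I A fullset -> is_ideal (ideal_join I A).
Proof.
  intros (hempty & _ & hunion & _) hfull. split; [|split; [|split]].
  - exists emptyset. split; [assumption|]. intros n hn; discriminate.
  - intros B C hBC [X [hX hC]]. exists X. split; [assumption|]. intros n hn; auto.
  - intros B C [X [hX hB]] [Y [hY hC]]. exists (unionb X Y). split; [auto|].
    intros n hn. unfold unionb in *. specialize (hB n). specialize (hC n).
    destruct (B n), (C n), (X n), (Y n), (A n); simpl in *; auto.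
  - exact hfull.
Qed.

Lemma maximal_ideal_prime I A : maximal_ideal I -> ~ I A -> I (fun n => negb (A n)).
Proof.
  intros [hideal hmax] hA.
  assert (hfull : ideal_join I A fullset).
  { apply NNPP. intro hn. apply hA. apply (hmax _ (ideal_join_is_ideal I A hideal hn)).
    - intros B hB. exists B. split; [assumption|].
      intros n hn'. unfold unionb. rewrite hn'. reflexivity.
    - exists emptyset. split; [apply hideal|].
      intros n hn'. unfold unionb. rewrite hn'. apply orb_true_r. }
  destruct hfull as [X [hX hsub]]. apply (proj1 (proj2 hideal) _ X); [|assumption].
  intros n hn. specialize (hsub n eq_refl). unfold unionb in hsub.
  destruct (A n); simpl in *; [discriminate|]. rewrite orb_false_r in hsub. assumption.
Qed.

Lemma maximal_ideal_flip I n x :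
  maximal_ideal I -> contains_fin I -> (I x <-> ~ I (flip n x)).
Proof.
  intros hI hfin. pose proof (proj1 hI) as (_ & hdown & hunion & hproper).
  assert (hinit : I (fun i => i <? n)).
  { apply hfin. exists n. intros i hi. apply Nat.ltb_lt, hi. }
  split.
  - intros hx hflip. apply hproper.
    apply (hdown _ (unionb (unionb x (flip n x)) (fun i => i <? n)));
      [|apply hunion; [apply hunion|]; assumption].
    intros i _. unfold unionb, flip. destruct (i <? n), (x i); reflexivity.
  - intro hflip. apply NNPP. intro hx. apply hflip.
    apply (hdown _ (unionb (fun i => negb (x i)) (fun i => i <? n)));
      [|apply hunion; [apply maximal_ideal_prime|]; assumption].
    intro i. unfold unionb, flip. destruct (i <? n), (x i); simpl; auto.
Qed.

Theorem maximal_ideal_not_baire_property I :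
  maximal_ideal I -> contains_fin I -> ~ baire_property (fun A => ~ I A).
Proof.
  intros hI hfin (W & D & hD & hW).
  assert (hgen : forall s, exists x,
      extends x s /\ generic D x /\ generic D (flip (length s) x)).
  { intro s.
    destruct (generic_extension (join D (flipped (length s) D))
                (expanding_join _ _ hD (expanding_flipped _ _ hD)) s) as (x & hxs & hx).
    apply generic_join in hx as [hx hxflip].
    exists x. split; [|split]; [assumption | assumption | apply generic_flipped, hxflip]. }
  destruct (classic (exists u, W u)) as [[u hu] | hempty].
  - destruct (hgen u) as (x & hxu & hx & hxflip).
    assert (hpos : ~ I x) by (apply (hW x hx); exists u; auto).
    assert (hpos' : ~ I (flip (length u) x)).
    { apply (hW _ hxflip). exists u. split; [assumption | apply extends_flip_length, hxu]. }
    exact (hpos (proj2 (maximal_ideal_flip I (length u) x hI hfin) hpos')).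
  - assert (hnull : forall y, generic D y -> I y).
    { intros y hy. apply NNPP. intro hpos. apply hempty.
      apply (hW y hy) in hpos as (u & hu & _). exists u; assumption. }
    destruct (hgen nil) as (x & _ & hx & hxflip).
    exact (proj1 (maximal_ideal_flip I 0 x hI hfin) (hnull x hx) (hnull _ hxflip)).
Qed.

Definition separating_coloring (A : nat -> bool) : nat -> nat -> bool :=
  fun m n => xorb (A m) (A n).

Definition separating_input (A : nat -> bool) : Dom := (fullset, separating_coloring A).

Lemma col_separating_coloring A m n : col (separating_coloring A) m n = xorb (A m) (A n).
Proof. unfold col, separating_coloring. destruct (m <? n); [reflexivity | apply xorb_comm]. Qed.

Lemma subadditive_separating_coloring A : subadditive (separating_coloring A).
Proof.
  intros m n k _ _. rewrite !col_separating_coloring.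
  destruct (A m), (A n), (A k); simpl; lia.
Qed.

Lemma baire_property_borel_separating P :
  borel_dom P -> baire_property (fun A => P (separating_input A)).
Proof.
  induction 1 as [n | m n | P _ IH | P _ IH | P Q _ IH hPQ].
  - apply (baire_property_local _ 0). intros x y _ h. exact h.
  - apply (baire_property_local _ (S (max m n))). intros x y hxy. simpl.
    unfold separating_coloring. rewrite (hxy m), (hxy n) by lia. auto.
  - apply baire_property_compl, IH.
  - apply baire_property_cunion, IH.
  - apply (baire_property_ext _ _ IH). intro A. apply hPQ.
Qed.

Lemma zero_homogeneous_separating A H n :
  zero_homogeneous (separating_coloring A) H -> H n = true -> A n = true -> subset H A.
Proof.
  intros hz hn hAn m hm. destruct (Nat.eq_dec m n) as [-> | hne]; [assumption|].
  specialize (hz m n hm hn hne). rewrite col_separating_coloring, hAn in hz.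
  destruct (A m); [reflexivity | discriminate].
Qed.

Lemma nowhere_zero_homogeneous_separating I A H :
  is_ideal I -> nowhere_zero_homogeneous I (separating_coloring A) H -> I A -> I H.
Proof.
  intros (_ & hdown & hunion & _) hnz hA.
  set (HA := fun m => H m && negb (A m)).
  assert (hHA : I HA).
  { apply NNPP. intro hpos.
    destruct (hnz HA (fun m hm => proj1 (proj1 (andb_true_iff _ _) hm)) hpos)
      as (m & k & hm & hk & _ & hmk).
    rewrite col_separating_coloring in hmk. unfold HA in hm, hk.
    apply andb_true_iff in hm as [_ hm]. apply andb_true_iff in hk as [_ hk].
    destruct (A m), (A k); simpl in *; discriminate. }
  apply (hdown H (unionb A HA)); [|apply hunion; assumption].
  intros m hm. unfold unionb, HA. rewrite hm. destruct (A m); reflexivity.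
Qed.

Lemma positive_iff_meets_witness I Phi :
  maximal_ideal I -> witnesses_weakly_Ramsey I Phi ->
  forall A, ~ I A <-> exists n, Phi (separating_input A) n = true /\ A n = true.
Proof.
  intros hI hPhi A. pose proof (proj1 hI) as hideal.
  pose proof hideal as (_ & hdown & _ & hproper).
  destruct (hPhi fullset (separating_coloring A) hproper (subadditive_separating_coloring A))
    as [[_ hH] hhom].
  unfold separating_input. set (H := Phi (fullset, separating_coloring A)) in *.
  split.
  - intro hA. apply NNPP. intro hmiss. apply hH.
    apply (hdown H (fun n => negb (A n))); [|apply maximal_ideal_prime; assumption].
    intros n hn. destruct (A n) eqn:hAn; [|reflexivity].
    exfalso. apply hmiss. exists n. split; assumption.
  - intros (n & hn & hAn) hA. destruct hhom as [hz | hnz].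
    + apply hH, (hdown H A); [eapply zero_homogeneous_separating; eassumption | exact hA].
    + exact (hH (nowhere_zero_homogeneous_separating I A H hideal hnz hA)).
Qed.

Theorem fact4p5 (I : (nat -> bool) -> Prop) :
  maximal_ideal I -> contains_fin I -> ~ uniformly_weakly_Ramsey I.
Proof.
  intros hI hfin [Phi [hborel hPhi]].
  apply (maximal_ideal_not_baire_property I hI hfin).
  apply baire_property_ext with
    (fun A => exists n, Phi (separating_input A) n = true /\ A n = true).
  2: { intro A. symmetry. apply (positive_iff_meets_witness I Phi hI hPhi). }
  apply baire_property_cunion. intro n. apply baire_property_and.
  - apply (baire_property_borel_separating (fun p => Phi p n = true)), hborel.
  - apply (baire_property_local _ (S n)). intros x y hxy hx. rewrite <- hxy by lia. exact hx.
Qed.
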